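(* Let $S$ be a nonempty finite set of graphs on $\Pi$ and $A$ the closed-above model generated by $S$. Then the uninterpreted complex of $A$ is $(n-2)$-connected.
   Context: $\Pi=\{p_1,\dots,p_n\}$. A graph is a directed graph on vertex set $\Pi$ containing all self-loops; $In_G(p)=\{q:(q,p)\in E(G)\}$. $\uparrow G=\{H: E(H)\supseteq E(G)\}$; the closed-above model generated by $S$ is the oblivious model whose set of allowed round graphs is $\bigcup_{G\in S}\uparrow G$. A (colored) simplex is a set $\sigma$ of pairs $(p,v)$ with $p\in\Pi$ such that each $p$ appears in at most one pair; a complex is a set of simplexes closed under taking subsets. The uninterpreted simplex of a graph $H$ is $\sigma_H=\{(p,In_H(p)):p\in\Pi\}$; the uninterpreted complex of an oblivious model with allowed graph set $\mathcal{S}$ is the complex whose facets are exactly the $\sigma_H$, $H\in\mathcal{S}$. A complex is $k$-connected if it is nonempty for $k\ge -1$ and every continuous map from the $m$-sphere into its geometric realization extends to the $(m+1)$-disk for all $0\le m\le k$; every complex is $k$-connected for $k\le -2$. *)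

From mathcomp Require Import all_boot.
From Stdlib Require Import Reals ZArith.
Set Implicit Arguments. Unset Strict Implicit. Unset Printing Implicit Defensive.

(** Processes: Pi = 'I_n.  A graph is an edge set containing all self-loops. *)
Definition edges (n : nat) := {set 'I_n * 'I_n}.

Definition is_graph (n : nat) (G : edges n) : Prop :=
  forall p : 'I_n, (p, p) \in G.

Definition In_G (n : nat) (G : edges n) (p : 'I_n) : {set 'I_n} :=
  [set q | (q, p) \in G].

Definition closed_above_allowed (n : nat) (S : {set edges n}) (H : edges n) : Prop :=
  is_graph H /\ exists2 G, G \in S & G \subset H.

(** Vertices of (uninterpreted) simplexes: pairs (process, view). *)
Definition vertex (n : nat) : finType := ('I_n * {set 'I_n})%type.

Definition unint_simplex (n : nat) (H : edges n) : {set vertex n} :=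
  [set (p, In_G H p) | p : 'I_n].

Definition unint_complex (n : nat) (allowed : edges n -> Prop) (s : {set vertex n}) : Prop :=
  exists2 H, allowed H & s \subset unint_simplex H.

Local Open Scope R_scope.

Definition Rsum (I : finType) (f : I -> R) : R := \big[Rplus/R0]_(i : I) f i.

(** Geometric realization of a complex K on a finite vertex type V:
    barycentric coordinate functions whose support is a simplex of K. *)
Definition realization (V : finType) (K : {set V} -> Prop) (x : V -> R) : Prop :=
  (forall v, 0 <= x v) /\ Rsum x = 1 /\
  exists2 s, K s & (forall v, x v <> 0 -> v \in s).

Definition euclid_dist (d : nat) (x y : 'I_d -> R) : R :=
  sqrt (Rsum (fun i => (x i - y i) ^ 2)).

Definition sphere (m : nat) (x : 'I_m.+1 -> R) : Prop := Rsum (fun i => x i ^ 2) = 1.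
Definition disk (m : nat) (x : 'I_m -> R) : Prop := Rsum (fun i => x i ^ 2) <= 1.

(** Continuity of f : D -> R^V (product topology = coordinatewise),
    D a subspace of R^d with the Euclidean metric. *)
Definition continuous_on (d : nat) (V : finType) (D : ('I_d -> R) -> Prop)
    (f : ('I_d -> R) -> V -> R) : Prop :=
  forall x, D x -> forall eps, 0 < eps -> exists2 delta, 0 < delta &
    forall y, D y -> euclid_dist x y < delta -> forall v, Rabs (f y v - f x v) < eps.

Definition k_connected (V : finType) (K : {set V} -> Prop) (k : Z) : Prop :=
  ((-1 <= k)%Z -> exists x, realization K x) /\
  forall m : nat, (Z.of_nat m <= k)%Z ->
    forall f : ('I_m.+1 -> R) -> V -> R,
      continuous_on (@sphere m) f ->
      (forall x, sphere x -> realization K (f x)) ->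
      exists g : ('I_m.+1 -> R) -> V -> R,
        continuous_on (@disk m.+1) g /\
        (forall x, disk x -> realization K (g x)) /\
        (forall x, sphere x -> g x = f x).

(* Let f : S^m -> |K| with m <= n - 2.  Pull the sphere radially onto the
   boundary of a cube and use the partition of unity of a fine Freudenthal
   triangulation to replace f by a map g which, at each point, is supported
   on at most m + 1 vertices of a simplex carrying f; so f and g are linearly
   homotopic, and g misses some process q.  As the model is closed above,
   the full view (q, Pi) of a missing process can be added to any simplex,
   and a thresholding homotopy does so continuously.  Scaling down every
   vertex whose view is not Pi then lands in the simplex of the complete
   graph, which is contracted to its barycenter.  The resulting
   null-homotopy of f extends f radially to the disk. *)

From HB Require Import structures.
From mathcomp Require Import all_boot zify_ssreflect.
From Stdlib Require Import Reals ZArith Lra Lia.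
From Stdlib Require Import ClassicalEpsilon Classical FunctionalExtensionality.
From Coquelicot Require Compactness.
Set Implicit Arguments. Unset Strict Implicit. Unset Printing Implicit Defensive.
Open Scope R_scope.

Lemma Rplus_associative : associative Rplus. Proof. by move=> *; ring. Qed.
Lemma Rmult_associative : associative Rmult. Proof. by move=> *; ring. Qed.
HB.instance Definition _ := Monoid.isComLaw.Build R R0 Rplus Rplus_associative Rplus_comm Rplus_0_l.
HB.instance Definition _ := Monoid.isComLaw.Build R R1 Rmult Rmult_associative Rmult_comm Rmult_1_l.
HB.instance Definition _ := Monoid.isMulLaw.Build R R0 Rmult Rmult_0_l Rmult_0_r.
HB.instance Definition _ :=
  Monoid.isAddLaw.Build R Rmult Rplus Rmult_plus_distr_r Rmult_plus_distr_l.

Section RealSums.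
Variable I : finType.
Implicit Types f g : I -> R.

Lemma Rsum_ge0 f : (forall i, 0 <= f i) -> 0 <= Rsum f.
Proof. by move=> f_ge0; apply: (big_ind (fun x => 0 <= x)) => //; [lra | move=> *; lra]. Qed.

Lemma Rsum_le f g : (forall i, f i <= g i) -> Rsum f <= Rsum g.
Proof. by move=> fg; apply: (big_ind2 (fun x y => x <= y)) => //; [lra | move=> *; lra]. Qed.

Lemma Rsum_add f g : Rsum (fun i => f i + g i) = Rsum f + Rsum g.
Proof. exact: big_split. Qed.

Lemma Rsum_scale f c : Rsum (fun i => c * f i) = c * Rsum f.
Proof. by rewrite /Rsum -big_distrr. Qed.

Lemma eq_Rsum f g : (forall i, f i = g i) -> Rsum f = Rsum g.
Proof. by move=> fg; apply: eq_bigr. Qed.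

Lemma Rsum_div f c : Rsum (fun i => f i / c) = Rsum f / c.
Proof. by rewrite /Rdiv Rmult_comm -Rsum_scale; apply: eq_Rsum => i; rewrite Rmult_comm. Qed.

Lemma Rsum_ge_term f i : (forall j, 0 <= f j) -> f i <= Rsum f.
Proof.
move=> f_ge0; rewrite /Rsum (bigD1 i) //=.
have : 0 <= \big[Rplus/R0]_(j | j != i) f j.
  by apply: (big_ind (fun x => 0 <= x)) => //; [lra | move=> *; lra].
lra.
Qed.

Lemma Rsum_const c : Rsum (fun _ : I => c) = INR #|I| * c.
Proof.
rewrite /Rsum big_const; elim: #|I| => [|k IH]; first by rewrite /=; ring.
by rewrite iterS IH S_INR; ring.
Qed.

Lemma Rsum_eq0 f : (forall i, f i = 0) -> Rsum f = 0.
Proof. by move=> f0; rewrite (eq_Rsum f0) Rsum_const; ring. Qed.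

Lemma Rsum1_exists_ge_avg f :
  (forall i, 0 <= f i) -> Rsum f = 1 -> exists i, / INR #|I| <= f i.
Proof.
move=> f_ge0 f_sum1; apply: NNPP => small.
have lt_avg i : f i < / INR #|I| by apply: Rnot_le_lt => ?; apply: small; exists i.
case: (pickP (fun _ : I => true)) => [i _ | I0]; last first.
  by move: f_sum1; rewrite /Rsum big_pred0 //; lra.
have cardI : 0 < INR #|I| by apply: lt_0_INR; apply/ltP/card_gt0P; exists i.
have : Rsum f < Rsum (fun _ : I => / INR #|I|).
  rewrite /Rsum (bigD1 i) //= [X in _ < X](bigD1 i) //=.
  apply: Rplus_lt_le_compat; first exact: lt_avg.
  apply: (big_ind2 (fun x y => x <= y)) => //; [lra | move=> *; lra | ].
  by move=> j _; apply: Rlt_le.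
by rewrite Rsum_const Rinv_r; lra.
Qed.

End RealSums.

Lemma Rsum_pair (I J : finType) (F : I * J -> R) :
  Rsum F = Rsum (fun i => Rsum (fun j => F (i, j))).
Proof. by rewrite /Rsum pair_bigA; apply: eq_bigr => -[]. Qed.

Definition cont1 (g : R -> R) (a : R) :=
  forall eps, 0 < eps -> exists2 d, 0 < d &
    forall a', Rabs (a' - a) < d -> Rabs (g a' - g a) < eps.
Definition cont2 (g : R -> R -> R) (a b : R) :=
  forall eps, 0 < eps -> exists2 d, 0 < d & forall a' b',
    Rabs (a' - a) < d -> Rabs (b' - b) < d -> Rabs (g a' b' - g a b) < eps.

Lemma cont1_of_continuity_pt g a : continuity_pt g a -> cont1 g a.
Proof.
move=> g_cont eps eps_gt0; case: (g_cont eps eps_gt0) => d [d_gt0 near].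
exists d => // a' a'a; case: (Req_dec a' a) => [->|a'_neq]; first by rewrite Rminus_diag Rabs_R0.
by apply: near; split => //; split => //; exact: nesym.
Qed.

Lemma cont2_plus a b : cont2 Rplus a b.
Proof.
move=> eps eps_gt0; exists (eps / 2) => [|a' b' Ha Hb]; first lra.
have -> : a' + b' - (a + b) = (a' - a) + (b' - b) by ring.
by apply: Rle_lt_trans (Rabs_triang _ _) _; lra.
Qed.

Lemma cont2_minus a b : cont2 Rminus a b.
Proof.
move=> eps eps_gt0; exists (eps / 2) => [|a' b' Ha Hb]; first lra.
have -> : a' - b' - (a - b) = (a' - a) + - (b' - b) by ring.
by apply: Rle_lt_trans (Rabs_triang _ _) _; rewrite Rabs_Ropp; lra.
Qed.

Lemma cont2_mult a b : cont2 Rmult a b.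
Proof.
move=> eps eps_gt0.
have Ha := Rabs_pos a; have Hb := Rabs_pos b.
set k := Rabs a + Rabs b + 1.
have k_gt0 : 0 < k by rewrite /k; lra.
set d := Rmin 1 (eps / (2 * k)).
have d_le1 : d <= 1 := Rmin_l _ _.
have dk : d * k <= eps / 2.
  apply: Rle_trans (Rmult_le_compat_r _ _ _ (Rlt_le _ _ k_gt0) (Rmin_r _ _)) _.
  by rewrite /Rdiv Rinv_mult; field_simplify; lra.
exists d => [|a' b' Ha' Hb']; first by apply: Rmin_pos; [lra | apply: Rdiv_lt_0_compat; lra].
have -> : a' * b' - a * b = (a' - a) * b' + a * (b' - b) by ring.
apply: Rle_lt_trans (Rabs_triang _ _) _; rewrite !Rabs_mult.
have b'_le : Rabs b' <= Rabs b + 1.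
  have -> : b' = b + (b' - b) by ring.
  by apply: Rle_trans (Rabs_triang _ _) _; lra.
have E1 : Rabs (a' - a) * Rabs b' <= d * (Rabs b + 1).
  by apply: Rmult_le_compat; try apply: Rabs_pos; lra.
have E2 : Rabs a * Rabs (b' - b) <= Rabs a * d by apply: Rmult_le_compat_l; lra.
rewrite /k in dk; nra.
Qed.

Lemma cont2_max a b : cont2 Rmax a b.
Proof.
move=> eps eps_gt0; exists eps => // a' b'.
by rewrite /Rmax; do 2 case: Rle_dec; move=> *; split_Rabs; lra.
Qed.

Lemma cont1_abs a : cont1 Rabs a.
Proof. exact/cont1_of_continuity_pt/Rcontinuity_abs. Qed.

Lemma cont1_inv a : a <> 0 -> cont1 Rinv a.
Proof.
move=> a_neq0; apply: cont1_of_continuity_pt.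
exact: (continuity_pt_inv id a (derivable_continuous_pt _ _ (derivable_pt_id a)) a_neq0).
Qed.

Lemma cont1_sqrt a : 0 <= a -> cont1 sqrt a.
Proof. by move=> a_ge0; apply/cont1_of_continuity_pt/continuity_pt_sqrt. Qed.

(* [close x y d] reads "y is d-close to x". *)
Section ContinuityWithin.
Variable X : Type.
Variable close : X -> X -> R -> Prop.
Hypothesis close_mono : forall x y d d', 0 < d -> d <= d' -> close x y d -> close x y d'.
Variable D : X -> Prop.
Variable x0 : X.

Definition cont_within (h : X -> R) :=
  forall eps, 0 < eps -> exists2 d, 0 < d &
    forall y, D y -> close x0 y d -> Rabs (h y - h x0) < eps.

Lemma cont_within_const c : cont_within (fun _ => c).
Proof. by move=> eps ?; exists 1 => [|y _ _]; [lra | rewrite Rminus_diag Rabs_R0]. Qed.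

Lemma eq_cont_within h1 h2 : (forall y, h1 y = h2 y) -> cont_within h1 -> cont_within h2.
Proof.
move=> h12 h1_cont eps /h1_cont [d d_gt0 near]; exists d => // y Dy Cy.
by rewrite -!h12; exact: near.
Qed.

Lemma cont_within_comp1 g h : cont1 g (h x0) -> cont_within h -> cont_within (fun y => g (h y)).
Proof.
move=> g_cont h_cont eps /g_cont [d1 d1_gt0 near1]; case: (h_cont d1 d1_gt0) => d2 d2_gt0 near2.
by exists d2 => // y Dy Cy; apply/near1/near2.
Qed.

Lemma cont_within_comp2 g h1 h2 : cont2 g (h1 x0) (h2 x0) ->
  cont_within h1 -> cont_within h2 -> cont_within (fun y => g (h1 y) (h2 y)).
Proof.
move=> g_cont h1_cont h2_cont eps /g_cont [d d_gt0 near].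
case: (h1_cont d d_gt0) => d1 d1_gt0 near1; case: (h2_cont d d_gt0) => d2 d2_gt0 near2.
have dmin_gt0 := Rmin_pos _ _ d1_gt0 d2_gt0.
exists (Rmin d1 d2) => // y Dy Cy; apply: near.
  by apply: near1 => //; apply: close_mono Cy => //; apply: Rmin_l.
by apply: near2 => //; apply: close_mono Cy => //; apply: Rmin_r.
Qed.

Lemma cont_within_plus h1 h2 :
  cont_within h1 -> cont_within h2 -> cont_within (fun y => h1 y + h2 y).
Proof. exact/cont_within_comp2/cont2_plus. Qed.
Lemma cont_within_minus h1 h2 :
  cont_within h1 -> cont_within h2 -> cont_within (fun y => h1 y - h2 y).
Proof. exact/cont_within_comp2/cont2_minus. Qed.
Lemma cont_within_mult h1 h2 :
  cont_within h1 -> cont_within h2 -> cont_within (fun y => h1 y * h2 y).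
Proof. exact/cont_within_comp2/cont2_mult. Qed.
Lemma cont_within_max h1 h2 :
  cont_within h1 -> cont_within h2 -> cont_within (fun y => Rmax (h1 y) (h2 y)).
Proof. exact/cont_within_comp2/cont2_max. Qed.
Lemma cont_within_abs h : cont_within h -> cont_within (fun y => Rabs (h y)).
Proof. exact/cont_within_comp1/cont1_abs. Qed.
Lemma cont_within_div h1 h2 : h2 x0 <> 0 ->
  cont_within h1 -> cont_within h2 -> cont_within (fun y => h1 y / h2 y).
Proof.
move=> h2_neq0 h1_cont h2_cont; apply: cont_within_mult => //.
exact/cont_within_comp1/h2_cont/cont1_inv.
Qed.
Lemma cont_within_sqrt h : 0 <= h x0 -> cont_within h -> cont_within (fun y => sqrt (h y)).
Proof. by move=> h_ge0; apply/cont_within_comp1/cont1_sqrt. Qed.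

Lemma cont_within_big (I : Type) (op : R -> R -> R) idx (op_cont : forall a b, cont2 op a b)
    (r : seq I) (F : I -> X -> R) :
  (forall i, cont_within (F i)) -> cont_within (fun y => \big[op/idx]_(i <- r) F i y).
Proof.
move=> F_cont; elim: r => [|i r IH].
  by apply: (eq_cont_within (h1 := fun _ => idx)) (cont_within_const _) => y; rewrite big_nil.
apply: (eq_cont_within (h1 := fun y => op (F i y) (\big[op/idx]_(j <- r) F j y))).
  by move=> y; rewrite big_cons.
exact: cont_within_comp2.
Qed.

Lemma cont_within_Rsum (I : finType) (F : I -> X -> R) :
  (forall i, cont_within (F i)) -> cont_within (fun y => Rsum (fun i => F i y)).
Proof. exact: cont_within_big cont2_plus _ _. Qed.

Lemma cont_within_Rprod (I : finType) (F : I -> X -> R) :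
  (forall i, cont_within (F i)) -> cont_within (fun y => \big[Rmult/R1]_(i : I) F i y).
Proof. exact: cont_within_big cont2_mult _ _. Qed.

End ContinuityWithin.

Section Pasting.
Variable X : Type.
Variable close : X -> X -> R -> Prop.
Hypothesis close_mono : forall x y d d', 0 < d -> d <= d' -> close x y d -> close x y d'.
Variable D : X -> Prop.
Variable x0 : X.

Lemma cont_within_sub (D' : X -> Prop) h :
  (forall y, D' y -> D y) -> cont_within close D x0 h -> cont_within close D' x0 h.
Proof. by move=> D'D h_cont eps /h_cont [d d_gt0 near]; exists d => // y /D'D; apply: near. Qed.

Lemma cont_within_paste (phi h1 h2 : X -> R) c :
  cont_within close D x0 phi ->
  (phi x0 <= c -> cont_within close (fun y => D y /\ phi y <= c) x0 h1) ->
  (c <= phi x0 -> cont_within close (fun y => D y /\ c <= phi y) x0 h2) ->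
  (phi x0 = c -> h1 x0 = h2 x0) ->
  cont_within close D x0 (fun y => if Rle_dec (phi y) c then h1 y else h2 y).
Proof.
move=> phi_cont h1_cont h2_cont h12 eps eps_gt0; cbv beta.
case: (Rtotal_order (phi x0) c) => [lt_c | [eq_c | gt_c]].
- have [d1 d1_gt0 near1] := h1_cont (Rlt_le _ _ lt_c) eps eps_gt0.
  have [d d_gt0 near] := phi_cont (c - phi x0) ltac:(lra).
  have dmin_gt0 := Rmin_pos _ _ d1_gt0 d_gt0.
  exists (Rmin d1 d) => // y Dy xy.
  have phi_y := near y Dy (close_mono (x := x0) dmin_gt0 (Rmin_r _ _) xy).
  destruct (Rle_dec (phi x0) c); last lra.
  destruct (Rle_dec (phi y) c); last by move: phi_y; split_Rabs; lra.
  apply: near1; first by split=> //; move: phi_y; split_Rabs; lra.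
  by apply: close_mono xy => //; apply: Rmin_l.
- have [d1 d1_gt0 near1] := h1_cont (Req_le _ _ eq_c) eps eps_gt0.
  have [d2 d2_gt0 near2] := h2_cont (Req_le _ _ (esym eq_c)) eps eps_gt0.
  have dmin_gt0 := Rmin_pos _ _ d1_gt0 d2_gt0.
  exists (Rmin d1 d2) => // y Dy xy; destruct (Rle_dec (phi x0) c); last lra.
  destruct (Rle_dec (phi y) c) as [le_c | gt_y].
    by apply: near1; [split | apply: close_mono xy => //; apply: Rmin_l].
  rewrite h12 //; apply: near2; first by split=> //; lra.
  by apply: close_mono xy => //; apply: Rmin_r.
- have [d2 d2_gt0 near2] := h2_cont (Rlt_le _ _ gt_c) eps eps_gt0.
  have [d d_gt0 near] := phi_cont (phi x0 - c) ltac:(lra).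
  have dmin_gt0 := Rmin_pos _ _ d2_gt0 d_gt0.
  exists (Rmin d2 d) => // y Dy xy.
  have phi_y := near y Dy (close_mono (x := x0) dmin_gt0 (Rmin_r _ _) xy).
  destruct (Rle_dec (phi x0) c); first lra.
  destruct (Rle_dec (phi y) c); first by move: phi_y; split_Rabs; lra.
  apply: near2; first by split=> //; move: phi_y; split_Rabs; lra.
  by apply: close_mono xy => //; apply: Rmin_l.
Qed.

End Pasting.

Lemma Rmin_of_family (I : finType) (P : I -> R -> Prop) :
  (forall i d d', 0 < d' -> d' <= d -> P i d -> P i d') ->
  (forall i, exists2 d, 0 < d & P i d) -> exists2 d, 0 < d & forall i, P i d.
Proof.
move=> P_mono P_ex.
suff [d d_gt0 Pd] : exists2 d, 0 < d & forall i, i \in enum I -> P i d.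
  by exists d => // i; apply: Pd; rewrite mem_enum.
elim: (enum I) => [|j r [d d_gt0 Pd]]; first by exists 1; [lra | move=> i].
case: (P_ex j) => dj dj_gt0 Pj.
have dmin_gt0 := Rmin_pos _ _ d_gt0 dj_gt0.
exists (Rmin d dj) => // i; rewrite inE => /predU1P [->|ir].
  exact: P_mono (Rmin_r _ _) Pj.
exact: P_mono (Rmin_l _ _) (Pd i ir).
Qed.

Definition Rneq0b (r : R) : bool := if Req_EM_T r 0 then false else true.
Lemma Rneq0bP r : reflect (r <> 0) (Rneq0b r).
Proof. by rewrite /Rneq0b; case: Req_EM_T => H; constructor. Qed.

Definition Rltb (r1 r2 : R) : bool := if Rlt_dec r1 r2 then true else false.
Lemma RltbP r1 r2 : reflect (r1 < r2) (Rltb r1 r2).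
Proof. by rewrite /Rltb; case: Rlt_dec => H; constructor. Qed.

Section Realization.
Variable V : finType.
Variable K : {set V} -> Prop.
Hypothesis K_down : forall s t : {set V}, t \subset s -> K s -> K t.
Implicit Types a b : V -> R.

Definition supp a : {set V} := [set v | Rneq0b (a v)].

Lemma suppP a v : reflect (a v <> 0) (v \in supp a).
Proof. by rewrite inE; apply: Rneq0bP. Qed.

Lemma realizationP a :
  realization K a <-> [/\ forall v, 0 <= a v, Rsum a = 1 & K (supp a)].
Proof.
split=> [[a_ge0 [a_sum1 [s Ks a_s]]] | [a_ge0 a_sum1 Ka]]; last first.
  by split=> //; split=> //; exists (supp a) => // v /suppP.
split=> //; apply: K_down Ks; apply/subsetP => v /suppP; exact: a_s.
Qed.

Definition interp (s : R) a b (v : V) : R := (1 - s) * a v + s * b v.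

Lemma interp0 a b : interp 0 a b = a.
Proof. by apply: functional_extensionality => v; rewrite /interp; ring. Qed.
Lemma interp1 a b : interp 1 a b = b.
Proof. by apply: functional_extensionality => v; rewrite /interp; ring. Qed.

Lemma interp_realization s a b t : 0 <= s <= 1 ->
  realization K a -> realization K b -> K t ->
  supp a \subset t -> supp b \subset t -> realization K (interp s a b).
Proof.
move=> s01 /realizationP [a_ge0 a_sum1 _] /realizationP [b_ge0 b_sum1 _] Kt at_ bt.
apply/realizationP; split.
- by move=> v; rewrite /interp; have := a_ge0 v; have := b_ge0 v; nra.
- by rewrite /interp Rsum_add !Rsum_scale a_sum1 b_sum1; ring.
apply: K_down Kt; apply/subsetP => v /suppP abv.
case: (Req_dec (a v) 0) => [av0 | /suppP av]; last exact: (subsetP at_).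
apply: (subsetP bt); apply/suppP => bv0; apply: abv.
by rewrite /interp av0 bv0; ring.
Qed.

End Realization.

Section ModelComplex.
Variable n : nat.
Variable S : {set edges n}.
Hypothesis S_neq0 : S != set0.
Notation V := (vertex n).
Implicit Types a : V -> R.

Definition model_complex := unint_complex (closed_above_allowed S).

Definition full_views (P : {set 'I_n}) : {set V} := [set (p, setT) | p in P].

Lemma model_complex_sub (s t : {set V}) : t \subset s -> model_complex s -> model_complex t.
Proof. by move=> ts [H allowedH sH]; exists H => //; apply: subset_trans sH. Qed.

Lemma model_complex_color_inj (s : {set V}) v w :
  model_complex s -> v \in s -> w \in s -> v.1 = w.1 -> v = w.
Proof.
move=> [H _ /subsetP sH] /sH/imsetP [p _ ->] /sH/imsetP [q _ ->] /= -> //.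
Qed.

(* Witness: add all edges into [P].  The model being closed above, the graph
   stays allowed, and only the views of the processes in [P] change. *)
Lemma model_complex_add_full_views (s : {set V}) (P : {set 'I_n}) :
  model_complex s -> (forall v, v \in s -> v.1 \notin P) ->
  model_complex (s :|: full_views P).
Proof.
move=> [H [H_graph [G GS GH]] /subsetP sH] s_notP.
exists (H :|: [set e | e.2 \in P]).
  split; first by move=> p; rewrite inE H_graph.
  by exists G => //; apply: subset_trans GH (subsetUl _ _).
apply/subsetP => v; rewrite inE => /orP [vs | /imsetP [p pP ->]].
  have /imsetP [p _ def_v] := sH v vs.
  have pP : p \notin P by have := s_notP v vs; rewrite def_v.
  apply/imsetP; exists p => //; rewrite def_v; congr pair.
  by apply/setP => q; rewrite !inE /= (negbTE pP) orbF.
apply/imsetP; exists p => //; congr pair.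
by apply/setP => q; rewrite !inE /= pP orbT.
Qed.

Lemma model_complex_full : model_complex (full_views setT).
Proof.
case/set0Pn: S_neq0 => G GS.
exists setT; first by split=> [p | ]; [rewrite inE | exists G => //; apply: subsetT].
apply/subsetP => v /imsetP [p _ ->]; apply/imsetP; exists p => //; congr pair.
by apply/setP => q; rewrite !inE.
Qed.

Lemma model_realizationP a : realization model_complex a <->
  [/\ forall v, 0 <= a v, Rsum a = 1 & model_complex (supp a)].
Proof. exact: realizationP model_complex_sub a. Qed.

Definition color_mass a (p : 'I_n) : R := Rsum (fun w : {set 'I_n} => a (p, w)).

Lemma color_mass_ge0 a p : (forall v, 0 <= a v) -> 0 <= color_mass a p.
Proof. by move=> a_ge0; apply: Rsum_ge0. Qed.

Lemma color_mass_ge a v : (forall v, 0 <= a v) -> a v <= color_mass a v.1.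
Proof. by case: v => p w a_ge0; apply: (Rsum_ge_term (f := fun w => a (p, w))) => ?. Qed.

Lemma Rsum_color_mass a : Rsum a = Rsum (color_mass a).
Proof. exact: Rsum_pair. Qed.

Lemma color_mass_single a p : realization model_complex a ->
  (exists2 w, color_mass a p = a (p, w) & forall w', w' != w -> a (p, w') = 0)
  \/ (forall w, a (p, w) = 0).
Proof.
move=> /model_realizationP [a_ge0 _ Ka].
case: (classic (exists w, a (p, w) <> 0)) => [[w apw] | none]; last first.
  by right=> w; apply: NNPP => apw; apply: none; exists w.
have others w' : w' != w -> a (p, w') = 0.
  move=> /eqP w'w; apply: NNPP => apw'; apply: w'w.
  have := model_complex_color_inj Ka (v := (p, w')) (w := (p, w)).
  by move=> /(_ (introT (suppP _ _) apw') (introT (suppP _ _) apw) erefl) [].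
left; exists w => //.
by rewrite /color_mass /Rsum (bigD1 w) //= big1 ?Rplus_0_r.
Qed.

Lemma exists_absent_color a : (#|supp a| < n)%nat -> exists q, forall w, a (q, w) = 0.
Proof.
move=> small.
have : ~~ ([set: 'I_n] \subset [set v.1 | v in supp a]).
  apply/negP => /subset_leq_card; rewrite cardsT card_ord => le_n.
  by have := leq_trans le_n (leq_imset_card _ _); rewrite leqNgt small.
case/subsetPn => q _ q_absent; exists q => w; apply: NNPP => aqw; apply: (negP q_absent).
by apply/imsetP; exists (q, w) => //; apply/suppP.
Qed.

(* The surviving vertices form a simplex: the heavy vertices
   have distinct, non-light colors (model_complex_add_full_views). *)
Definition threshold (s : R) a (v : V) : R :=
  Rmax 0 (a v - s) + (if v.2 == setT then Rmax 0 (s - color_mass a v.1) else 0).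
Definition thresholded (s : R) a (v : V) : R := threshold s a v / Rsum (threshold s a).

Lemma threshold_ge0 s a v : 0 <= threshold s a v.
Proof.
rewrite /threshold; have := Rmax_l 0 (a v - s); have := Rmax_l 0 (s - color_mass a v.1).
by case: (v.2 == setT); lra.
Qed.

Lemma Rsum_threshold_ge s a : realization model_complex a -> 0 <= s ->
  INR n * s <= / 2 -> / 2 <= Rsum (threshold s a).
Proof.
move=> a_real s_ge0 ns_le.
have /model_realizationP [a_ge0 a_sum1 _] := a_real.
have color_ge p : color_mass a p - s <= Rsum (fun w : {set 'I_n} => threshold s a (p, w)).
  case: (color_mass_single p a_real) => [[w -> _] | a0]; last first.
    rewrite /color_mass Rsum_eq0 //.
    have := Rsum_ge0 (f := fun w : {set 'I_n} => threshold s a (p, w)).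
    by move=> /(_ (fun w => threshold_ge0 s a (p, w))); lra.
  apply: Rle_trans (Rsum_ge_term (f := fun w : {set 'I_n} => threshold s a (p, w)) w _); last first.
    by move=> ?; apply: threshold_ge0.
  rewrite /threshold /=; set apw := a (p, w).
  have := Rmax_r 0 (apw - s); have := Rmax_l 0 (s - color_mass a p).
  by case: ifP; lra.
rewrite Rsum_pair; apply: Rle_trans (Rsum_le color_ge).
rewrite (eq_Rsum (g := fun p => color_mass a p + - s)) ?Rsum_add; last by move=> p; ring.
by rewrite -Rsum_color_mass a_sum1 Rsum_const card_ord; lra.
Qed.

Lemma thresholded_realization s a : realization model_complex a -> 0 <= s ->
  INR n * s <= / 2 -> realization model_complex (thresholded s a).
Proof.
move=> a_real s_ge0 ns_le.
have sum_ge := Rsum_threshold_ge a_real s_ge0 ns_le.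
have /model_realizationP [a_ge0 a_sum1 Ka] := a_real.
apply/model_realizationP; split.
- move=> v; apply: Rmult_le_pos (threshold_ge0 _ _ _) _.
  by apply/Rlt_le/Rinv_0_lt_compat; lra.
- by rewrite /thresholded Rsum_div; field; lra.
set heavy := [set v : V | Rltb s (a v)].
set light := [set p : 'I_n | Rltb (color_mass a p) s].
have K_heavy : model_complex heavy.
  apply: model_complex_sub Ka; apply/subsetP => v; rewrite !inE => /RltbP sv.
  by apply/Rneq0bP; lra.
have K_both : model_complex (heavy :|: full_views light).
  apply: model_complex_add_full_views => // v; rewrite !inE => /RltbP sv.
  by apply/negP => /RltbP; have := color_mass_ge v a_ge0; lra.
apply: model_complex_sub K_both; apply/subsetP => v /suppP.
rewrite /thresholded /Rdiv => /(Rmult_neq_0_reg _ _) [thr_v _].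
rewrite inE; case: (Rlt_dec s (a v)) => [sv | sv].
  by rewrite inE; apply/orP; left; apply/RltbP.
apply/orP; right; move: thr_v; rewrite /threshold Rmax_left ?Rplus_0_l; last lra.
case: v {sv} => p w /=; case: eqP => // ->.
case: (Rlt_dec (color_mass a p) s) => [ps _ | ps]; last by rewrite Rmax_left //; lra.
by apply/imsetP; exists p; rewrite // inE; apply/RltbP.
Qed.

Lemma thresholded_absent_pos s a q : realization model_complex a -> 0 < s ->
  INR n * s <= / 2 -> (forall w, a (q, w) = 0) -> 0 < thresholded s a (q, setT).
Proof.
move=> a_real s_gt0 ns_le a_q0.
have sum_ge := Rsum_threshold_ge a_real (Rlt_le _ _ s_gt0) ns_le.
rewrite /thresholded {1}/threshold /= eqxx a_q0 {1}/color_mass Rsum_eq0 //.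
rewrite Rmax_left; last lra; rewrite Rmax_right; last lra.
by apply: Rdiv_lt_0_compat; lra.
Qed.

Lemma thresholded0 a : (forall v, 0 <= a v) -> Rsum a = 1 -> thresholded 0 a = a.
Proof.
move=> a_ge0 a_sum1.
have thr0 v : threshold 0 a v = a v.
  rewrite /threshold Rminus_0_r Rmax_right //; case: (v.2 == setT); last ring.
  by rewrite Rmax_left; [ring | have := color_mass_ge0 v.1 a_ge0; lra].
by apply: functional_extensionality => v; rewrite /thresholded thr0 (eq_Rsum thr0) a_sum1; field.
Qed.

Definition drain_coef (s : R) (v : V) : R := if v.2 == setT then 1 else 1 - s.
Definition drain (s : R) a (v : V) : R :=
  drain_coef s v * a v / Rsum (fun u => drain_coef s u * a u).

Lemma drain_coef_ge0 s v : s <= 1 -> 0 <= drain_coef s v.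
Proof. by rewrite /drain_coef; case: (v.2 == setT); lra. Qed.

Lemma drain_den_ge s a q : (forall v, 0 <= a v) -> s <= 1 ->
  a (q, setT) <= Rsum (fun u => drain_coef s u * a u).
Proof.
move=> a_ge0 s_le1.
have -> : a (q, setT) = drain_coef s (q, setT) * a (q, setT) by rewrite /drain_coef eqxx; ring.
apply: (Rsum_ge_term (f := fun u => drain_coef s u * a u)) => u.
exact/Rmult_le_pos/a_ge0/drain_coef_ge0.
Qed.

Lemma drain_realization s a q : realization model_complex a -> 0 < a (q, setT) ->
  0 <= s <= 1 -> realization model_complex (drain s a).
Proof.
move=> /model_realizationP [a_ge0 a_sum1 Ka] aq s01.
have den_ge := drain_den_ge q a_ge0 (proj2 s01).
apply/model_realizationP; split.
- move=> v; apply: Rmult_le_pos; last by apply/Rlt_le/Rinv_0_lt_compat; lra.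
  by apply/Rmult_le_pos/a_ge0/drain_coef_ge0; lra.
- by rewrite /drain Rsum_div; field; lra.
apply: model_complex_sub Ka; apply/subsetP => v /suppP dv; apply/suppP => av0.
by apply: dv; rewrite /drain av0 Rmult_0_r /Rdiv Rmult_0_l.
Qed.

Lemma supp_drain1 a : supp (drain 1 a) \subset full_views setT.
Proof.
apply/subsetP => -[p w] /suppP; rewrite /drain /drain_coef /=.
case: eqP => [-> _ | _]; first by apply/imsetP; exists p.
by rewrite Rminus_diag /Rdiv !Rmult_0_l.
Qed.

Lemma drain0 a : Rsum a = 1 -> drain 0 a = a.
Proof.
move=> a_sum1; have coef0 u : drain_coef 0 u * a u = a u.
  by rewrite /drain_coef; case: (u.2 == setT); ring.
by apply: functional_extensionality => v; rewrite /drain coef0 (eq_Rsum coef0) a_sum1; field.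
Qed.

Definition full_bary (v : V) : R := if v.2 == setT then / INR n else 0.

Lemma supp_full_bary : supp full_bary \subset full_views setT.
Proof.
apply/subsetP => -[p w] /suppP; rewrite /full_bary /=.
by case: eqP => [-> _ | //]; apply/imsetP; exists p.
Qed.

Lemma full_bary_realization : (0 < n)%nat -> realization model_complex full_bary.
Proof.
move=> n_gt0; have n_pos : 0 < INR n by apply/lt_0_INR/ltP.
apply/model_realizationP; split.
- move=> v; rewrite /full_bary; case: (v.2 == setT); last lra.
  exact/Rlt_le/Rinv_0_lt_compat.
- rewrite Rsum_pair (eq_Rsum (g := fun _ => / INR n)).
    by rewrite Rsum_const card_ord; field; lra.
  move=> p; rewrite /Rsum (bigD1 setT) //= /full_bary /= eqxx big1 ?Rplus_0_r //.
  by move=> w /negbTE ->.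
exact: model_complex_sub supp_full_bary model_complex_full.
Qed.

End ModelComplex.

Section SphereMaps.
Variable m : nat.
Notation E := ('I_m.+1 -> R).

Definition close_sup (x y : E) (d : R) := forall i, Rabs (y i - x i) < d.
Definition close_cyl (p q : E * R) (d : R) :=
  (forall i, Rabs (q.1 i - p.1 i) < d) /\ Rabs (q.2 - p.2) < d.
Definition cylinder (p : E * R) := sphere p.1 /\ 0 <= p.2 <= 1.

Lemma close_sup_mono x y d d' : 0 < d -> d <= d' -> close_sup x y d -> close_sup x y d'.
Proof. by move=> _ dd' xy i; have := xy i; lra. Qed.
Lemma close_cyl_mono p q d d' : 0 < d -> d <= d' -> close_cyl p q d -> close_cyl p q d'.
Proof. by move=> _ dd' [pq1 pq2]; split; [move=> i; have := pq1 i |]; lra. Qed.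

Lemma coord_le_euclid_dist (x y : E) i : Rabs (x i - y i) <= euclid_dist x y.
Proof.
rewrite /euclid_dist -sqrt_Rsqr_abs; apply: sqrt_le_1_alt.
rewrite Rsqr_pow2; apply: (Rsum_ge_term (f := fun j => (x j - y j) ^ 2)) => j.
exact: pow2_ge_0.
Qed.

Lemma euclid_dist_le_sum (x y : E) : euclid_dist x y <= Rsum (fun i => Rabs (x i - y i)).
Proof.
have sum_ge0 : 0 <= Rsum (fun i => Rabs (x i - y i)) by apply: Rsum_ge0 => i; apply: Rabs_pos.
rewrite /euclid_dist -(sqrt_Rsqr _ sum_ge0); apply: sqrt_le_1_alt.
rewrite /Rsqr -Rsum_scale; apply: Rsum_le => i.
rewrite -Rsqr_pow2 Rsqr_abs /Rsqr; apply: Rmult_le_compat_r; first exact: Rabs_pos.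
by apply: (Rsum_ge_term (f := fun i => Rabs (x i - y i))) => j; apply: Rabs_pos.
Qed.

Lemma euclid_dist_lt x y d : 0 < d ->
  close_sup x y (d / (2 * INR m.+1)) -> euclid_dist x y < d.
Proof.
move=> d_gt0 xy; have m_pos : 0 < INR m.+1 by apply: lt_0_INR; lia.
apply: Rle_lt_trans (euclid_dist_le_sum x y) _.
apply: (Rle_lt_trans _ (Rsum (fun _ : 'I_m.+1 => d / (2 * INR m.+1)))).
  by apply: Rsum_le => i; rewrite Rabs_minus_sym; apply: Rlt_le.
by rewrite Rsum_const card_ord; field_simplify; lra.
Qed.

Lemma cont_within_coord (D : E -> Prop) x i : cont_within close_sup D x (fun y => y i).
Proof. by move=> eps ?; exists eps => // y _; apply. Qed.

Lemma cont_within_cyl_fst (h : E -> R) x s :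
  cont_within close_sup (@sphere m) x h ->
  cont_within close_cyl cylinder (x, s) (fun p => h p.1).
Proof.
by move=> h_cont eps /h_cont [d d_gt0 near]; exists d => // -[y t] [Sy _] [xy _]; apply: near.
Qed.

Lemma cont_within_cyl_snd x s : cont_within close_cyl cylinder (x, s) (fun p => p.2).
Proof. by move=> eps ?; exists eps => // -[y t] _ []. Qed.

Lemma cont_within_cyl_stretch (F : E * R -> R) x s b :
  cont_within close_cyl cylinder (x, 2 * s + b) F ->
  cont_within close_cyl (fun q => cylinder (q.1, 2 * q.2 + b)) (x, s)
    (fun q => F (q.1, 2 * q.2 + b)).
Proof.
move=> F_cont eps /F_cont [d d_gt0 near].
exists (d / 2) => [|[y t] D_yt [/= xy ts]]; first lra.
apply: near => //; split=> /= [i | ]; first by have := xy i; lra.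
have -> : 2 * t + b - (2 * s + b) = 2 * (t - s) by ring.
by rewrite Rabs_mult Rabs_right; lra.
Qed.

Variable V : finType.
Implicit Types f g : E -> V -> R.

Definition sphere_cont f :=
  forall x, sphere x -> forall v, cont_within close_sup (@sphere m) x (fun y => f y v).

Lemma sphere_cont_of_continuous_on f : continuous_on (@sphere m) f -> sphere_cont f.
Proof.
move=> f_cont x Sx v eps /(f_cont x Sx) [d d_gt0 near].
have m_pos : 0 < INR m.+1 by apply: lt_0_INR; lia.
exists (d / (2 * INR m.+1)); first by apply: Rdiv_lt_0_compat; lra.
by move=> y Sy xy; apply: near => //; apply: euclid_dist_lt.
Qed.

Lemma continuous_on_of_cont_within (D : E -> Prop) f :
  (forall x, D x -> forall v, cont_within close_sup D x (fun y => f y v)) -> continuous_on D f.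
Proof.
move=> f_cont x Dx eps eps_gt0.
have [d d_gt0 near] : exists2 d, 0 < d &
    forall v y, D y -> close_sup x y d -> Rabs (f y v - f x v) < eps.
  apply: (Rmin_of_family (P := fun v d => forall y, D y -> close_sup x y d -> _)).
    by move=> v d d' d'_gt0 d'd near y Dy xy; apply: near => //; apply: close_sup_mono xy.
  by move=> v; apply: f_cont.
exists d => // y Dy xy v; apply: near => // i.
by have := coord_le_euclid_dist x y i; rewrite Rabs_minus_sym; lra.
Qed.

Variable K : {set V} -> Prop.

Definition homotopy (H : E -> R -> V -> R) :=
  (forall p, cylinder p -> forall v, cont_within close_cyl cylinder p (fun q => H q.1 q.2 v)) /\
  (forall p, cylinder p -> realization K (H p.1 p.2)).

Definition homotopic f g := exists2 H, homotopy H &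
  (forall x, sphere x -> H x 0 = f x) /\ (forall x, sphere x -> H x 1 = g x).

Definition hconcat (H1 H2 : E -> R -> V -> R) (x : E) (s : R) : V -> R :=
  if Rle_dec s (/ 2) then H1 x (2 * s) else H2 x (2 * s - 1).

Lemma homotopy_hconcat H1 H2 : homotopy H1 -> homotopy H2 ->
  (forall x, sphere x -> H1 x 1 = H2 x 0) -> homotopy (hconcat H1 H2).
Proof.
move=> [H1_cont H1_real] [H2_cont H2_real] H12; split; last first.
  move=> [x s] [/= Sx s01]; rewrite /hconcat; case: Rle_dec => s_half.
    by apply: (H1_real (x, _)); split=> //=; lra.
  by apply: (H2_real (x, _)); split=> //=; lra.
move=> [x s] [/= Sx s01] v.
apply: (eq_cont_within (h1 := fun q => if Rle_dec q.2 (/ 2)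
  then H1 q.1 (2 * q.2 + 0) v else H2 q.1 (2 * q.2 + -1) v)).
  by move=> q; rewrite /hconcat Rplus_0_r; case: Rle_dec.
apply: (cont_within_paste close_cyl_mono (phi := fun q => q.2)).
- exact: cont_within_cyl_snd.
- move=> /= s_half; have cyl : cylinder (x, 2 * s + 0) by split=> //=; lra.
  have := H1_cont _ cyl v.
  move=> /(cont_within_cyl_stretch (F := fun q => H1 q.1 q.2 v)) /=.
  apply: cont_within_sub => -[y t] [[Sy t01] t_half]; split=> //.
  by move: t01 t_half; cbn [fst snd]; lra.
- move=> /= half_s; have cyl : cylinder (x, 2 * s + -1) by split=> //=; lra.
  have := H2_cont _ cyl v.
  move=> /(cont_within_cyl_stretch (F := fun q => H2 q.1 q.2 v)) /=.
  apply: cont_within_sub => -[y t] [[Sy t01] half_t]; split=> //.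
  by move: t01 half_t; cbn [fst snd]; lra.
- cbn [fst snd] => ->.
  have -> : 2 * / 2 + 0 = 1 by field.
  have -> : 2 * / 2 + -1 = 0 by field.
  by rewrite H12.
Qed.

Lemma homotopic_trans f g h : homotopic f g -> homotopic g h -> homotopic f h.
Proof.
move=> [H1 H1_hom [H1f H1g]] [H2 H2_hom [H2g H2h]].
exists (hconcat H1 H2); first by apply: homotopy_hconcat => // x Sx; rewrite H1g ?H2g.
split=> x Sx; rewrite /hconcat.
  by destruct (Rle_dec 0 (/ 2)); [rewrite Rmult_0_r H1f | lra].
destruct (Rle_dec 1 (/ 2)); first lra.
have -> : 2 * 1 - 1 = 1 by ring.
exact: H2h.
Qed.

End SphereMaps.

Lemma cont_within_interp (V : finType) (X : Type) (close : X -> X -> R -> Prop)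
    (close_mono : forall x y d d', 0 < d -> d <= d' -> close x y d -> close x y d')
    (D : X -> Prop) (x0 : X) (A B : X -> V -> R) (sg : X -> R) v :
  (forall u, cont_within close D x0 (fun p => A p u)) -> cont_within close D x0 sg ->
  (forall u, cont_within close D x0 (fun p => B p u)) ->
  cont_within close D x0 (fun p => interp (sg p) (A p) (B p) v).
Proof.
move=> A_cont sg_cont B_cont; apply: cont_within_plus => //; apply: cont_within_mult => //.
exact/cont_within_minus/sg_cont/cont_within_const.
Qed.

Section DeformationContinuity.
Variable n : nat.
Variable S : {set edges n}.
Notation V := (vertex n).
Variable X : Type.
Variable close : X -> X -> R -> Prop.
Hypothesis close_mono : forall x y d d', 0 < d -> d <= d' -> close x y d -> close x y d'.
Variable D : X -> Prop.
Variable x0 : X.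
Variable A : X -> V -> R.
Hypothesis A_cont : forall v, cont_within close D x0 (fun p => A p v).
Variable sg : X -> R.
Hypothesis sg_cont : cont_within close D x0 sg.

Lemma cont_within_threshold v : cont_within close D x0 (fun p => threshold (sg p) (A p) v).
Proof.
have mass_cont q : cont_within close D x0 (fun p => color_mass (A p) q).
  by apply: cont_within_Rsum => // w; apply: A_cont.
apply: cont_within_plus => //.
  by apply: cont_within_max => //; [apply: cont_within_const | apply: cont_within_minus].
case: (v.2 == setT); last exact: cont_within_const.
by apply: cont_within_max => //; [apply: cont_within_const | apply: cont_within_minus].
Qed.

Lemma cont_within_thresholded v : realization (model_complex S) (A x0) -> 0 <= sg x0 ->
  INR n * sg x0 <= / 2 -> cont_within close D x0 (fun p => thresholded (sg p) (A p) v).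
Proof.
move=> A_real sg_ge0 nsg_le; have := Rsum_threshold_ge A_real sg_ge0 nsg_le.
move=> sum_ge; apply: cont_within_div => //; first lra.
  exact: cont_within_threshold.
by apply: cont_within_Rsum => // u; apply: cont_within_threshold.
Qed.

Lemma cont_within_drain v q : (forall u, 0 <= A x0 u) -> 0 < A x0 (q, setT) -> sg x0 <= 1 ->
  cont_within close D x0 (fun p => drain (sg p) (A p) v).
Proof.
move=> A_ge0 Aq sg_le1; have := drain_den_ge q A_ge0 sg_le1.
have coef_cont u : cont_within close D x0 (fun p => drain_coef (sg p) u * A p u).
  apply: cont_within_mult => //; rewrite /drain_coef; case: (u.2 == setT).
    exact: cont_within_const.
  exact/cont_within_minus/sg_cont/cont_within_const.
by move=> den_ge; apply: cont_within_div => //; [lra | apply: cont_within_Rsum].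
Qed.

End DeformationContinuity.

Section Homotopies.
Variable m : nat.
Notation E := ('I_m.+1 -> R).
Variable V : finType.
Variable K : {set V} -> Prop.
Hypothesis K_down : forall s t : {set V}, t \subset s -> K s -> K t.
Implicit Types f g : E -> V -> R.

Lemma cont_within_cyl_interp f g x s v : sphere_cont f -> sphere_cont g -> sphere x ->
  cont_within (@close_cyl m) (@cylinder m) (x, s) (fun p => interp p.2 (f p.1) (g p.1) v).
Proof.
move=> f_cont g_cont Sx.
apply: (cont_within_interp (@close_cyl_mono m) (A := fun p => f p.1)) => [u | | u].
- exact: (cont_within_cyl_fst (h := fun y => f y u) _ (f_cont _ Sx u)).
- exact: cont_within_cyl_snd.
- exact: (cont_within_cyl_fst (h := fun y => g y u) _ (g_cont _ Sx u)).
Qed.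

Lemma homotopic_interp f g : sphere_cont f -> sphere_cont g ->
  (forall x, sphere x -> realization K (f x)) -> (forall x, sphere x -> realization K (g x)) ->
  (forall x, sphere x -> K (supp (f x) :|: supp (g x))) -> homotopic K f g.
Proof.
move=> f_cont g_cont f_real g_real fg_simplex.
exists (fun x s => interp s (f x) (g x)); last by split=> x _; rewrite ?interp0 ?interp1.
split=> [[x s] [/= Sx _] v | [x s] [/= Sx s01]]; first exact: cont_within_cyl_interp.
apply: (interp_realization K_down s01 (f_real x Sx) (g_real x Sx) (fg_simplex x Sx)).
  exact: subsetUl.
exact: subsetUr.
Qed.

End Homotopies.

Section ModelHomotopies.
Variable n : nat.
Variable S : {set edges n}.
Variable m : nat.
Notation E := ('I_m.+1 -> R).
Notation V := (vertex n).
Notation K := (model_complex S).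
Variable A : E -> V -> R.
Hypothesis A_cont : sphere_cont A.
Hypothesis A_real : forall x, sphere x -> realization K (A x).

Lemma sphere_cont_thresholded dl : 0 <= dl -> INR n * dl <= / 2 ->
  sphere_cont (fun x => thresholded dl (A x)).
Proof.
move=> dl_ge0 ndl_le x Sx v.
apply: (cont_within_thresholded (@close_sup_mono m) (A_cont Sx)) => //; last exact: A_real.
exact: cont_within_const.
Qed.

Lemma homotopic_thresholded dl : 0 <= dl -> INR n * dl <= / 2 ->
  homotopic K A (fun x => thresholded dl (A x)).
Proof.
move=> dl_ge0 ndl_le; exists (fun x s => thresholded (dl * s) (A x)); last first.
  split=> x Sx; last by rewrite Rmult_1_r.
  have /(model_realizationP S) [A_ge0 A_sum1 _] := A_real Sx.
  by rewrite Rmult_0_r thresholded0.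
split=> [[x s] [/= Sx s01] v | [x s] [/= Sx s01]]; last first.
  by apply: thresholded_realization; [apply: A_real | nra | rewrite -Rmult_assoc; nra].
apply: (cont_within_thresholded (@close_cyl_mono m) (A := fun p => A p.1)) => /=.
- by move=> u; apply: (cont_within_cyl_fst (h := fun y => A y u)); apply: A_cont.
- apply: cont_within_mult => //; [exact: close_cyl_mono | exact: cont_within_const |].
  exact: cont_within_cyl_snd.
- exact: A_real.
- nra.
- by rewrite -Rmult_assoc; nra.
Qed.

Hypothesis A_full : forall x, sphere x -> exists q, 0 < A x (q, setT).

Lemma sphere_cont_drain1 : sphere_cont (fun x => drain 1 (A x)).
Proof.
move=> x Sx v; have [q Aq] := A_full Sx.
have /(model_realizationP S) [A_ge0 _ _] := A_real Sx.
apply: (cont_within_drain (@close_sup_mono m) (A_cont Sx) _ v A_ge0 Aq) => //.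
  exact: cont_within_const.
exact: Rle_refl.
Qed.

Lemma homotopic_drain1 : homotopic K A (fun x => drain 1 (A x)).
Proof.
exists (fun x s => drain s (A x)); last first.
  split=> x Sx //; have /(model_realizationP S) [_ A_sum1 _] := A_real Sx.
  by rewrite drain0.
split=> [[x s] [/= Sx s01] v | [x s] [/= Sx s01]]; have [q Aq] := A_full Sx.
  have /(model_realizationP S) [A_ge0 _ _] := A_real Sx.
  apply: (cont_within_drain (@close_cyl_mono m) (x0 := (x, s)) (A := fun p => A p.1) _ _ v
    A_ge0 Aq) => //.
  - by move=> u; apply: (cont_within_cyl_fst (h := fun y => A y u)); apply: A_cont.
  - exact: cont_within_cyl_snd.
  - by case: s01.
exact: drain_realization (A_real Sx) Aq s01.
Qed.

End ModelHomotopies.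

Section Norms.
Variable m : nat.
Notation E := ('I_m.+1 -> R).
Implicit Types x y : E.

Definition norm2 y := sqrt (Rsum (fun i => y i ^ 2)).
Definition normalize y : E := fun i => y i / norm2 y.
Definition norm_sup y : R := \big[Rmax/0]_(i : 'I_m.+1) Rabs (y i).

Lemma Rsum_sq_ge0 y : 0 <= Rsum (fun i => y i ^ 2).
Proof. by apply: Rsum_ge0 => i; apply: pow2_ge_0. Qed.

Lemma sphere_e0 : sphere (fun i : 'I_m.+1 => if i == ord0 then 1 else 0).
Proof.
rewrite /sphere /Rsum (bigD1 ord0) //= big1 => [|i /negbTE ->]; last by ring.
by ring.
Qed.

Lemma sphere_normalize y : 0 < norm2 y -> sphere (normalize y).
Proof.
move=> y_gt0; rewrite /sphere /normalize.
rewrite (eq_Rsum (g := fun i => / (norm2 y ^ 2) * y i ^ 2)); last by move=> i; field; lra.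
rewrite Rsum_scale /norm2 /= Rmult_1_r sqrt_sqrt; last exact: Rsum_sq_ge0.
by apply: Rinv_l => sum0; move: y_gt0; rewrite /norm2 sum0 sqrt_0; lra.
Qed.

Lemma norm2_sphere y : sphere y -> norm2 y = 1.
Proof. by rewrite /sphere /norm2 => ->; rewrite sqrt_1. Qed.

Lemma norm2_disk y : disk y -> norm2 y <= 1.
Proof. by rewrite /disk /norm2 => Dy; rewrite -sqrt_1; apply: sqrt_le_1_alt. Qed.

Lemma normalize_sphere y : sphere y -> normalize y = y.
Proof.
by move=> Sy; apply: functional_extensionality => i; rewrite /normalize norm2_sphere //; field.
Qed.

Lemma coord_le_norm2 y i : Rabs (y i) <= norm2 y.
Proof.
rewrite -sqrt_Rsqr_abs; apply: sqrt_le_1_alt; rewrite Rsqr_pow2.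
by apply: (Rsum_ge_term (f := fun j => y j ^ 2)) => j; apply: pow2_ge_0.
Qed.

Lemma norm2_div y c : 0 < c -> norm2 (fun i => y i / c) = norm2 y / c.
Proof.
move=> c_gt0; rewrite /norm2 (eq_Rsum (g := fun i => (/ c) ^ 2 * y i ^ 2)); last first.
  by move=> i; field; lra.
rewrite Rsum_scale sqrt_mult; [| exact: pow2_ge_0 | exact: Rsum_sq_ge0].
by rewrite sqrt_pow2 ?[_ / c]Rmult_comm //; apply/Rlt_le/Rinv_0_lt_compat.
Qed.

Lemma normalize_div y c : 0 < c -> 0 < norm2 y -> normalize (fun i => y i / c) = normalize y.
Proof.
move=> c_gt0 y_gt0; apply: functional_extensionality => i.
by rewrite /normalize norm2_div //; field; lra.
Qed.

Lemma cont_within_norm2 (D : E -> Prop) x : cont_within (@close_sup m) D x norm2.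
Proof.
apply: cont_within_sqrt; first exact: Rsum_sq_ge0.
apply: cont_within_Rsum; first exact: close_sup_mono.
move=> i; apply: (eq_cont_within (h1 := fun y => y i * y i)); first by move=> y; ring.
by apply: cont_within_mult; [exact: close_sup_mono | apply: cont_within_coord ..].
Qed.

Lemma cont_within_normalize (D : E -> Prop) x i :
  0 < norm2 x -> cont_within (@close_sup m) D x (fun y => normalize y i).
Proof.
move=> x_gt0; apply: cont_within_div; [exact: close_sup_mono | lra | |].
  exact: cont_within_coord.
exact: cont_within_norm2.
Qed.

Lemma norm_sup_seq (r : seq 'I_m.+1) y :
  [/\ forall i, i \in r -> Rabs (y i) <= \big[Rmax/0]_(j <- r) Rabs (y j),
      0 <= \big[Rmax/0]_(j <- r) Rabs (y j) &
      r != [::] -> exists2 i, i \in r & Rabs (y i) = \big[Rmax/0]_(j <- r) Rabs (y j)].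
Proof.
elim: r => [|a r [IH_ge IH_ge0 IH_attained]]; first by rewrite big_nil; split=> //; lra.
rewrite big_cons; split.
- move=> i; rewrite inE => /predU1P [->|ir]; first exact: Rmax_l.
  exact: Rle_trans (IH_ge i ir) (Rmax_r _ _).
- exact: Rle_trans IH_ge0 (Rmax_r _ _).
move=> _; case: r IH_ge IH_ge0 IH_attained => [|b r] _ _ IH_attained.
  by exists a; [rewrite inE eqxx | rewrite big_nil Rmax_left //; apply: Rabs_pos].
have [// | i ir <-] := IH_attained; rewrite /Rmax; case: Rle_dec => _.
  by exists i; rewrite // inE ir orbT.
by exists a; rewrite // inE eqxx.
Qed.

Lemma norm_sup_ge y i : Rabs (y i) <= norm_sup y.
Proof. by case: (norm_sup_seq (index_enum 'I_m.+1) y) => + _ _; apply; rewrite mem_index_enum. Qed.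

Lemma norm_sup_ge0 y : 0 <= norm_sup y.
Proof. by case: (norm_sup_seq (index_enum 'I_m.+1) y). Qed.

Lemma norm_sup_attained y : exists i, Rabs (y i) = norm_sup y.
Proof.
case: (norm_sup_seq (index_enum 'I_m.+1) y) => _ _ [|i _ yi]; last by exists i.
apply/eqP => enum0; have : ord0 \in index_enum 'I_m.+1 by rewrite mem_index_enum.
by rewrite enum0.
Qed.

Lemma norm_sup_sphere y : sphere y -> 0 < norm_sup y.
Proof.
move=> Sy; case: (Rle_lt_or_eq_dec _ _ (norm_sup_ge0 y)) => // sup0.
have y0 i : y i = 0.
  apply: NNPP => /Rabs_no_R0 yi; have := norm_sup_ge y i; have := Rabs_pos (y i); lra.
move: Sy; rewrite /sphere (eq_Rsum (g := fun _ => 0)) ?Rsum_const => [|i]; first lra.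
by rewrite y0; ring.
Qed.

Lemma cont_within_norm_sup (D : E -> Prop) x : cont_within (@close_sup m) D x norm_sup.
Proof.
apply: (cont_within_big (@close_sup_mono m) _ cont2_max) => i.
exact/cont_within_abs/cont_within_coord.
Qed.

End Norms.

Section ConeExtension.
Variable m : nat.
Notation E := ('I_m.+1 -> R).
Variable V : finType.
Variable K : {set V} -> Prop.

Lemma cont_within_comp_cyl (Y : Type) (close : Y -> Y -> R -> Prop) (D : Y -> Prop) y0
    (close_mono : forall x y d d', 0 < d -> d <= d' -> close x y d -> close x y d')
    (phi1 : Y -> E) (phi2 : Y -> R) (h : E * R -> R) :
  (forall i, cont_within close D y0 (fun y => phi1 y i)) -> cont_within close D y0 phi2 ->
  cont_within (@close_cyl m) (@cylinder m) (phi1 y0, phi2 y0) h ->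
  cont_within close (fun y => D y /\ cylinder (phi1 y, phi2 y)) y0 (fun y => h (phi1 y, phi2 y)).
Proof.
move=> phi1_cont phi2_cont h_cont eps /h_cont [d d_gt0 near].
have [d1 d1_gt0 near1] : exists2 d1, 0 < d1 &
    forall i y, D y -> close y0 y d1 -> Rabs (phi1 y i - phi1 y0 i) < d.
  apply: (Rmin_of_family (P := fun i d1 => forall y, D y -> close y0 y d1 -> _)).
    by move=> i e e' e'_gt0 e'e near_i y Dy Cy; apply: near_i => //; apply: close_mono Cy.
  by move=> i; apply: phi1_cont.
have [d2 d2_gt0 near2] := phi2_cont d d_gt0.
have dmin_gt0 := Rmin_pos _ _ d1_gt0 d2_gt0.
exists (Rmin d1 d2) => // y [Dy cyl_y] Cy; apply: near => //; split=> /= [i |].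
  by apply: near1 => //; apply: close_mono Cy => //; apply: Rmin_l.
by apply: near2 => //; apply: close_mono Cy => //; apply: Rmin_r.
Qed.

Definition cone_ext (H : E -> R -> V -> R) (c : V -> R) (y : E) : V -> R :=
  if Rle_dec (norm2 y) (/ 2) then c else H (normalize y) (2 - 2 * norm2 y).

Lemma extension_of_homotopic_const f c : homotopic K f (fun _ => c) ->
  exists g : E -> V -> R, continuous_on (@disk m.+1) g /\
    (forall x, disk x -> realization K (g x)) /\ (forall x, sphere x -> g x = f x).
Proof.
move=> [H [H_cont H_real] [H0 H1]].
have c_real : realization K c.
  by rewrite -(H1 _ (sphere_e0 m)); apply: (H_real (_, 1)); split=> /=; [apply: sphere_e0 | lra].
have cyl_normalize (y : E) : disk y -> / 2 < norm2 y -> cylinder (normalize y, 2 - 2 * norm2 y).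
  by move=> Dy y_gt; split=> /=; [apply: sphere_normalize; lra | have := norm2_disk Dy; lra].
exists (cone_ext H c); split; last split.
- apply: continuous_on_of_cont_within => y0 Dy0 v.
  apply: (eq_cont_within (h1 := fun y => if Rle_dec (norm2 y) (/ 2) then c v
    else H (normalize y) (2 - 2 * norm2 y) v)); first by move=> y; rewrite /cone_ext; case: Rle_dec.
  apply: (cont_within_paste (@close_sup_mono m)); first exact: cont_within_norm2.
    by move=> _; apply: cont_within_const.
  + move=> y0_ge; have y0_pos : 0 < norm2 y0 by lra.
    have cyl0 : cylinder (normalize y0, 2 - 2 * norm2 y0).
      by split=> /=; [apply: sphere_normalize | have := norm2_disk Dy0; lra].
    have time_cont : cont_within (@close_sup m) (@disk m.+1) y0 (fun y => 2 - 2 * norm2 y).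
      apply: cont_within_minus; [exact: close_sup_mono | exact: cont_within_const |].
      apply: cont_within_mult; [exact: close_sup_mono | exact: cont_within_const |].
      exact: cont_within_norm2.
    have := cont_within_comp_cyl (@close_sup_mono m)
      (fun i => cont_within_normalize _ i y0_pos) time_cont (H_cont _ cyl0 v).
    apply: cont_within_sub => y [Dy y_ge]; split=> //.
    by split=> /=; [apply: sphere_normalize | have := norm2_disk Dy]; lra.
  + move=> y0_eq; have y0_pos : 0 < norm2 y0 by lra.
    rewrite y0_eq (_ : 2 - 2 * / 2 = 1); last field.
    by rewrite H1 //; apply: sphere_normalize.
- move=> y Dy; rewrite /cone_ext.
  destruct (Rle_dec (norm2 y) (/ 2)) as [le_half | y_gt]; first exact: c_real.
  cbn [is_left]; exact: (H_real (normalize y, _) (cyl_normalize y Dy (Rnot_le_lt _ _ y_gt))).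
- move=> y Sy; rewrite /cone_ext norm2_sphere //.
  destruct (Rle_dec 1 (/ 2)); first lra; cbn [is_left].
  by rewrite normalize_sphere // Rmult_1_r Rminus_diag H0.
Qed.

End ConeExtension.

Fixpoint Tn_of_fun (k : nat) (g : nat -> R) : Compactness.Tn k R :=
  if k is k'.+1 then (g 0%nat, Tn_of_fun k' (fun j => g j.+1)) else tt.

Fixpoint fun_of_Tn (k : nat) : Compactness.Tn k R -> nat -> R :=
  match k as k0 return Compactness.Tn k0 R -> nat -> R with
  | 0 => fun _ _ => 0
  | k'.+1 => fun t j => if j is j'.+1 then fun_of_Tn t.2 j' else t.1
  end.

Lemma fun_of_TnK k g j : (j < k)%nat -> fun_of_Tn (Tn_of_fun k g) j = g j.
Proof. by elim: k g j => [|k IH] g [|j] //= j_lt; rewrite IH. Qed.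

Lemma bounded_Tn_of_fun k a b g : (forall j, (j < k)%nat -> a <= g j <= b) ->
  Compactness.bounded_n k (Tn_of_fun k (fun _ => a)) (Tn_of_fun k (fun _ => b)) (Tn_of_fun k g).
Proof.
elim: k g => [|k IH] g g_ab //=; split; first exact: g_ab.
by apply: IH => j j_lt; apply: g_ab.
Qed.

Lemma close_fun_of_Tn k d x t : Compactness.close_n k d x t ->
  forall j, (j < k)%nat -> Rabs (fun_of_Tn x j - fun_of_Tn t j) < d.
Proof.
elim: k x t => [|k IH] x t /=; first by move=> _ j; rewrite ltn0.
by case: x t => [x1 x2] [t1 t2] [xt1 xt2] [|j] //= j_lt; apply: IH.
Qed.

Section UniformContinuity.
Variable m : nat.
Notation E := ('I_m.+1 -> R).
Variable V : finType.
Variable f : E -> V -> R.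
Hypothesis f_cont : sphere_cont f.

Lemma cont_comp_normalize (y : E) : (exists i, / 4 <= Rabs (y i)) -> forall eps, 0 < eps ->
  exists2 d, 0 < d & forall w, (forall i, Rabs (w i - y i) < d) ->
    forall v, Rabs (f (normalize w) v - f (normalize y) v) < eps.
Proof.
move=> [i0 y_i0] eps eps_gt0.
have y_pos : 0 < norm2 y by have := coord_le_norm2 y i0; lra.
have S_y := sphere_normalize y_pos.
have [eta eta_gt0 near] : exists2 eta, 0 < eta & forall v w, sphere w ->
    close_sup (normalize y) w eta -> Rabs (f w v - f (normalize y) v) < eps.
  apply: (Rmin_of_family (P := fun v eta => forall w, sphere w -> close_sup _ w eta -> _)).
    by move=> v d d' d'_gt0 d'd near w Sw yw; apply: near => //; apply: close_sup_mono yw.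
  by move=> v; apply: f_cont.
have [d1 d1_gt0 near1] : exists2 d1, 0 < d1 &
    forall i w, close_sup y w d1 -> Rabs (normalize w i - normalize y i) < eta.
  apply: (Rmin_of_family (P := fun i d1 => forall w, close_sup y w d1 -> _)).
    by move=> i d d' d'_gt0 d'd near_i w yw; apply: near_i; apply: close_sup_mono yw.
  move=> i; have [d d_gt0 near_i] := cont_within_normalize (fun _ => True) i y_pos eta_gt0.
  by exists d => // w yw; apply: near_i.
have dmin_gt0 : 0 < Rmin d1 (/ 8) by apply: Rmin_pos; lra.
exists (Rmin d1 (/ 8)) => // w yw v.
have w_pos : 0 < norm2 w.
  have := coord_le_norm2 w i0; have := yw i0; have := Rmin_r d1 (/ 8).
  by move: y_i0; split_Rabs; lra.
apply: near; first exact: sphere_normalize.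
move=> i; apply: near1 => j; have := yw j; have := Rmin_l d1 (/ 8); lra.
Qed.

(* [d <= 1/8] and [/4 <= |y i|] keep the [2 d]-ball around [y] away from the
   origin, where [normalize] is discontinuous. *)
Definition good_radius (eps : R) (y : E) (d : R) :=
  [/\ 0 < d, d <= / 8 & (exists i, / 4 <= Rabs (y i)) ->
    forall w, (forall i, Rabs (w i - y i) < 2 * d) ->
      forall v, Rabs (f (normalize w) v - f (normalize y) v) < eps].

Lemma exists_good_radius eps y : 0 < eps -> exists d, good_radius eps y d.
Proof.
move=> eps_gt0; case: (classic (exists i, / 4 <= Rabs (y i))) => [y_far | y_near]; last first.
  by exists (/ 8); split=> //; lra.
have [d d_gt0 near] := cont_comp_normalize y_far eps_gt0.
exists (Rmin (d / 2) (/ 8)); split=> [||_ w yw]; [by apply: Rmin_pos; lra | exact: Rmin_r |].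
by apply: near => i; have := yw i; have := Rmin_l (d / 2) (/ 8); lra.
Qed.

(* Lebesgue number argument on the cube [-2, 2]^(m+1), by gauge compactness. *)
Lemma uniform_cont_comp_normalize eps : 0 < eps -> exists N : nat, (2 <= N)%nat /\
  forall y w : E, norm_sup y = 1 -> (forall i, Rabs (w i - y i) < / INR N) ->
    forall v, Rabs (f (normalize w) v - f (normalize y) v) < 2 * eps.
Proof.
move=> eps_gt0.
pose E_of (t : Compactness.Tn m.+1 R) : E := fun i => fun_of_Tn t i.
pose radius t :=
  proj1_sig (constructive_indefinite_description _ (exists_good_radius (E_of t) eps_gt0)).
have radiusP t : good_radius eps (E_of t) (radius t).
  by rewrite /radius; case: constructive_indefinite_description.
pose gauge t : posreal := mkposreal (radius t) (let: And3 r_gt0 _ _ := radiusP t in r_gt0).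
have [d cover] := Compactness.compactness_value m.+1
  (Tn_of_fun m.+1 (fun _ => -2)) (Tn_of_fun m.+1 (fun _ => 2)) gauge.
have d_gt0 : 0 < d := cond_pos d.
have [N [N_ge2 N_gt]] : exists N : nat, (2 <= N)%nat /\ / d < INR N.
  have [up_gt _] := archimed (/ d).
  have up_ge0 : (0 <= up (/ d))%Z by apply: le_IZR; have := Rinv_0_lt_compat _ d_gt0; lra.
  exists (Z.to_nat (up (/ d))).+2; split=> //.
  by rewrite !S_INR INR_IZR_INZ Z2Nat.id //; lra.
exists N; split=> // y w y_sup1 wy v.
have N_pos : 0 < INR N by apply: lt_0_INR; apply/ltP; lia.
have N_lt : / INR N < d.
  rewrite -(Rinv_inv d); apply: Rinv_lt_contravar => //.
  by apply: Rmult_lt_0_compat => //; apply: Rinv_0_lt_compat.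
pose g (j : nat) : R := y (inord j).
have y_box : Compactness.bounded_n m.+1 (Tn_of_fun m.+1 (fun _ => -2))
    (Tn_of_fun m.+1 (fun _ => 2)) (Tn_of_fun m.+1 g).
  apply: bounded_Tn_of_fun => j _; rewrite /g; have := norm_sup_ge y (inord j).
  by rewrite y_sup1; split_Rabs; lra.
apply: NNPP => far; apply: (cover _ y_box) => -[t [_ [yt d_le]]]; apply: far.
have y_near_t (i : 'I_m.+1) : Rabs (y i - E_of t i) < radius t.
  have := close_fun_of_Tn yt (ltn_ord i); rewrite fun_of_TnK //.
  by rewrite /g inord_val.
have [_ r_le good] := radiusP t.
have t_far : exists i, / 4 <= Rabs (E_of t i).
  have [i0 y_i0] := norm_sup_attained y; exists i0.
  by have := y_near_t i0; rewrite y_sup1 in y_i0; move: y_i0; split_Rabs; lra.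
have d_le_r : d <= radius t by [].
have := good t_far y (fun i => ltac:(have := y_near_t i; lra)) v.
have := good t_far w (fun i => ltac:(have := y_near_t i; have := wy i; split_Rabs; lra)) v.
by split_Rabs; lra.
Qed.

End UniformContinuity.

Lemma up_IZR k : up (IZR k) = (k + 1)%Z.
Proof.
have [up_gt up_le] := archimed (IZR k).
have : (k < up (IZR k))%Z by apply: lt_IZR.
have : (up (IZR k) <= k + 1)%Z by apply: le_IZR; rewrite plus_IZR; lra.
lia.
Qed.

Definition floorZ (r : R) : Z := (up r - 1)%Z.

Lemma floorZ_spec r : IZR (floorZ r) <= r < IZR (floorZ r) + 1.
Proof. by have [? ?] := archimed r; rewrite /floorZ minus_IZR; lra. Qed.

Lemma eq_of_leq_sum (I : finType) (F G : I -> nat) k :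
  (forall i, G i <= F i)%nat -> (\sum_i F i = \sum_i G i)%nat -> F k = G k.
Proof.
move=> GF; rewrite (bigD1 k) //= [X in _ = X](bigD1 k) //=.
have : (\sum_(i | i != k) G i <= \sum_(i | i != k) F i)%nat by apply: leq_sum.
by have := GF k; lia.
Qed.

(* [bump z u] is positive exactly when [u] lies in the open star of the grid
   point [z] in the Freudenthal triangulation of R^(m+1): all the coordinates
   of [u - z], together with [0], differ pairwise by less than [1].  On a face
   of a cube (one coordinate of [u] an integer) at most [m + 1] of these stars
   meet, which is where the dimension bound enters. *)
Section FreudenthalBumps.
Variable m N : nat.
Notation E := ('I_m.+1 -> R).

Definition grid := {ffun 'I_m.+1 -> 'I_(2 * N).+3}.
Definition grid_coord (z : grid) (i : 'I_m.+1) : R := INR (z i) - INR N.+1.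
Definition offset (z : grid) (u : E) (o : option 'I_m.+1) : R :=
  if o is Some i then u i - grid_coord z i else 0.
Definition bump (z : grid) (u : E) : R :=
  \big[Rmult/R1]_(ab : option 'I_m.+1 * option 'I_m.+1)
    Rmax 0 (1 - (offset z u ab.1 - offset z u ab.2)).

Lemma bump_ge0 z u : 0 <= bump z u.
Proof.
by apply: (big_ind (fun x => 0 <= x)); [lra | move=> *; nra | move=> ab _; apply: Rmax_l].
Qed.

Lemma bump_gt0 z u : 0 < bump z u <-> forall a b, offset z u a - offset z u b < 1.
Proof.
split=> [bump_pos a b | offsets].
  apply: Rnot_le_lt => ab; move: bump_pos; rewrite /bump (bigD1 (a, b)) //= Rmax_left; last lra.
  by rewrite Rmult_0_l; lra.
apply: (big_ind (fun x => 0 < x)); [lra | move=> *; nra | move=> [a b] _ /=].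
by rewrite Rmax_right; have := offsets a b; lra.
Qed.

Lemma grid_coordE z i : grid_coord z i = IZR (Z.of_nat (z i) - Z.of_nat N.+1).
Proof. by rewrite /grid_coord minus_IZR -!INR_IZR_INZ. Qed.

Definition floor_index (u : E) i : nat := Z.to_nat (floorZ (u i) + Z.of_nat N.+1).

Lemma bump_gt0_coord z u i : 0 < bump z u ->
  (Z.of_nat (z i) - Z.of_nat N.+1 = floorZ (u i) \/
   Z.of_nat (z i) - Z.of_nat N.+1 = floorZ (u i) + 1)%Z.
Proof.
move/bump_gt0 => offsets.
have := offsets (Some i) None; have := offsets None (Some i) => /=.
have := floorZ_spec (u i); rewrite grid_coordE => -[fl_le fl_gt] lt1 gt1.
have : (floorZ (u i) - 1 < Z.of_nat (z i) - Z.of_nat N.+1)%Z.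
  by apply: lt_IZR; rewrite minus_IZR; lra.
have : (Z.of_nat (z i) - Z.of_nat N.+1 < floorZ (u i) + 2)%Z.
  by apply: lt_IZR; rewrite plus_IZR; lra.
lia.
Qed.

Lemma bump_gt0_floor z u i : 0 < bump z u ->
  (floor_index u i <= z i <= (floor_index u i).+1)%nat.
Proof. by move=> bump_pos; have := bump_gt0_coord i bump_pos; rewrite /floor_index; lia. Qed.

Lemma bump_gt0_int_coord z u i k : u i = IZR k -> 0 < bump z u ->
  z i = floor_index u i :> nat.
Proof.
move=> ui_int /bump_gt0 offsets.
have := offsets (Some i) None; have := offsets None (Some i) => /=.
rewrite grid_coordE ui_int => lt1 gt1.
have : (k - 1 < Z.of_nat (z i) - Z.of_nat N.+1)%Z by apply: lt_IZR; rewrite minus_IZR; lra.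
have : (Z.of_nat (z i) - Z.of_nat N.+1 < k + 1)%Z by apply: lt_IZR; rewrite plus_IZR; lra.
by rewrite /floor_index /floorZ ui_int up_IZR; lia.
Qed.

Lemma bump_gt0_comparable z z' u j k : 0 < bump z u -> 0 < bump z' u ->
  (z' k < z k)%nat -> (z j < z' j)%nat -> False.
Proof.
move=> /bump_gt0 offsets /bump_gt0 offsets' lt_k lt_j.
have := offsets (Some j) (Some k); have := offsets' (Some k) (Some j) => /=.
have : INR (z' k) + 1 <= INR (z k) by rewrite -S_INR; apply/le_INR/leP.
have : INR (z j) + 1 <= INR (z' j) by rewrite -S_INR; apply/le_INR/leP.
rewrite /grid_coord; lra.
Qed.

Definition cell_rank (u : E) (z : grid) : nat := (\sum_(i < m.+1) (z i - floor_index u i))%nat.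

Lemma cell_rank_le z u i k : u i = IZR k -> 0 < bump z u -> (cell_rank u z <= m)%nat.
Proof.
move=> ui_int bump_pos; rewrite /cell_rank (bigD1 i) //= (bump_gt0_int_coord ui_int bump_pos).
rewrite subnn add0n; apply: (@leq_trans (\sum_(j < m.+1 | j != i) 1)%nat).
  by apply: leq_sum => j _; have := bump_gt0_floor j bump_pos; lia.
by rewrite sum1_card cardC1 card_ord.
Qed.

Lemma cell_rank_inj z z' u : 0 < bump z u -> 0 < bump z' u ->
  cell_rank u z = cell_rank u z' -> z = z'.
Proof.
move=> bump_pos bump_pos' rank_eq; apply/ffunP => k; apply: val_inj => /=.
wlog lt_k : z z' bump_pos bump_pos' rank_eq / (z k < z' k)%nat.
  move=> wlog_lt; case: (ltngtP (z k) (z' k)) => // [lt_k | lt_k].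
    exact: wlog_lt.
  by apply/esym/wlog_lt.
have le_pw j : (z j - floor_index u j <= z' j - floor_index u j)%nat.
  case: (ltnP (z' j) (z j)) => // lt_j; last lia.
  by case: (bump_gt0_comparable bump_pos' bump_pos lt_k lt_j).
have := eq_of_leq_sum (F := fun j => (z' j - floor_index u j)%nat) k le_pw (esym rank_eq).
by have := bump_gt0_floor k bump_pos; have := bump_gt0_floor k bump_pos'; lia.
Qed.

Lemma card_bump_gt0 u i k : u i = IZR k -> (#|[set z : grid | Rltb 0 (bump z u)]| <= m.+1)%nat.
Proof.
move=> ui_int.
have rank_inj : {in [set z : grid | Rltb 0 (bump z u)] &,
    injective (fun z => inord (cell_rank u z) : 'I_m.+1)}.
  move=> z z'; rewrite !inE => /RltbP bump_pos /RltbP bump_pos' /(congr1 val) /=.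
  rewrite !inordK ?ltnS ?(cell_rank_le ui_int) //.
  exact: cell_rank_inj.
have := @leq_card_in _ _ (fun z : grid => inord (cell_rank u z) : 'I_m.+1) _ rank_inj.
by rewrite card_ord.
Qed.

End FreudenthalBumps.

Section Rescaling.
Variable m : nat.
Notation E := ('I_m.+1 -> R).
Implicit Types x y : E.

Lemma norm_sup_div_self x : 0 < norm_sup x -> norm_sup (fun i => x i / norm_sup x) = 1.
Proof.
move=> x_pos; set y := fun i => x i / norm_sup x.
have y_le i : Rabs (y i) <= 1.
  rewrite /y /Rdiv Rabs_mult Rabs_inv (Rabs_right (norm_sup x)); last lra.
  apply: (Rmult_le_reg_r (norm_sup x)) => //; rewrite Rmult_assoc Rinv_l; last lra.
  by rewrite Rmult_1_r Rmult_1_l; apply: norm_sup_ge.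
have [i0 x_i0] := norm_sup_attained x; have [j y_j] := norm_sup_attained y.
have := norm_sup_ge y i0; have := y_le j.
have -> : Rabs (y i0) = 1.
  by rewrite /y /Rdiv Rabs_mult Rabs_inv (Rabs_right (norm_sup x)) ?x_i0; [field | ]; lra.
lra.
Qed.

(* Radial projection of the sphere onto the boundary of the cube [-N, N]^(m+1). *)
Definition rescale (N : nat) y : E := fun i => INR N * y i / norm_sup y.

Lemma rescale_bound N x i : sphere x -> Rabs (rescale N x i) <= INR N.
Proof.
move=> Sx; have x_pos := norm_sup_sphere Sx.
rewrite /rescale /Rdiv !Rabs_mult (Rabs_right (INR N)); last exact/Rle_ge/pos_INR.
rewrite Rabs_inv (Rabs_right (norm_sup x)); last lra.
have := norm_sup_ge x i; have := pos_INR N => N_ge0 x_i.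
rewrite Rmult_assoc -{2}(Rmult_1_r (INR N)); apply: Rmult_le_compat_l => //.
by apply: (Rmult_le_reg_r (norm_sup x)) => //; rewrite Rmult_assoc Rinv_l; lra.
Qed.

Lemma rescale_int_coord N x : sphere x -> exists i k, rescale N x i = IZR k.
Proof.
move=> Sx; have x_pos := norm_sup_sphere Sx.
have [i0 x_i0] := norm_sup_attained x; exists i0; rewrite /rescale.
case: (Rle_or_lt 0 (x i0)) => [x_ge0 | x_lt0].
  exists (Z.of_nat N); rewrite -INR_IZR_INZ; move: x_i0; rewrite Rabs_right; last lra.
  by move=> ->; field; lra.
exists (- Z.of_nat N)%Z; rewrite opp_IZR -INR_IZR_INZ; move: x_i0; rewrite Rabs_left //.
move=> x_i0; have -> : x i0 = - norm_sup x by lra.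
by field; lra.
Qed.

Lemma cont_within_rescale N x i (D : E -> Prop) :
  0 < norm_sup x -> cont_within (@close_sup m) D x (fun y => rescale N y i).
Proof.
move=> x_pos; apply: cont_within_div; [exact: close_sup_mono | lra | |].
  apply: cont_within_mult; [exact: close_sup_mono | exact: cont_within_const |].
  exact: cont_within_coord.
exact: cont_within_norm_sup.
Qed.

End Rescaling.

Section Approximation.
Variable m : nat.
Notation E := ('I_m.+1 -> R).
Variable V : finType.
Variable f : E -> V -> R.
Variable N : nat.
Hypothesis N_ge1 : (1 <= N)%nat.
Variable v0 : V.
Notation grid := (grid m N).

Definition cell_point (z : grid) : E := fun i => grid_coord z i / INR N.

(* [v0] is the junk value when no vertex carries average mass at the grid
   point [z] (e.g. [z] is the origin). *)
Definition cell_vertex (z : grid) : V :=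
  epsilon (inhabits v0) (fun v => / INR #|V| <= f (normalize (cell_point z)) v).

Definition approx (y : E) (v : V) : R :=
  Rsum (fun z : grid => if cell_vertex z == v then bump z (rescale N y) else 0) /
  Rsum (fun z : grid => bump z (rescale N y)).

Lemma Rsum_bump_gt0 x : sphere x -> 0 < Rsum (fun z : grid => bump z (rescale N x)).
Proof.
move=> Sx; set u := rescale N x.
pose c (i : 'I_m.+1) : nat := Z.to_nat (floorZ (u i) + Z.of_nat N.+1).
have c_spec i : (c i < (2 * N).+3)%nat /\ INR (c i) - INR N.+1 = IZR (floorZ (u i)).
  have := rescale_bound N i Sx; rewrite -/u => u_le.
  have [fl_le fl_gt] := floorZ_spec (u i).
  have : (- Z.of_nat N <= floorZ (u i))%Z.
    have : IZR (- Z.of_nat N - 1) < IZR (floorZ (u i)).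
      by rewrite minus_IZR opp_IZR -INR_IZR_INZ; move: u_le; split_Rabs; lra.
    by move=> /lt_IZR; lia.
  have : (floorZ (u i) <= Z.of_nat N)%Z.
    by apply: le_IZR; rewrite -INR_IZR_INZ; move: u_le; split_Rabs; lra.
  move=> fl_leN fl_geN; split; first by apply/ltP; rewrite /c; lia.
  by rewrite /c INR_IZR_INZ Z2Nat.id ?plus_IZR -?INR_IZR_INZ; [ring | lia].
pose z0 : grid := [ffun i => inord (c i)].
have z0_coord i : grid_coord z0 i = IZR (floorZ (u i)).
  by rewrite /grid_coord /z0 ffunE inordK; case: (c_spec i).
have z0_pos : 0 < bump z0 u.
  apply/bump_gt0 => a b; have offset01 o : 0 <= offset z0 u o < 1.
    case: o => [i|] /=; last lra.
    by rewrite z0_coord; have := floorZ_spec (u i); lra.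
  by have := offset01 a; have := offset01 b; lra.
apply: Rlt_le_trans z0_pos _.
by apply: (Rsum_ge_term (f := fun z => bump z u)) => z; apply: bump_ge0.
Qed.

Lemma Rsum_approx x : sphere x -> Rsum (approx x) = 1.
Proof.
move=> Sx; have den_pos := Rsum_bump_gt0 Sx.
rewrite /approx Rsum_div /Rsum exchange_big /=.
rewrite (eq_bigr (fun z : grid => bump z (rescale N x))).
  by rewrite /Rdiv Rinv_r //; apply: Rgt_not_eq; exact: den_pos.
move=> z _; rewrite (bigD1 (cell_vertex z)) //= eqxx big1 ?Rplus_0_r //.
by move=> v /negbTE; rewrite eq_sym => ->.
Qed.

Lemma approx_ge0 x v : sphere x -> 0 <= approx x v.
Proof.
move=> Sx; have den_pos := Rsum_bump_gt0 Sx.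
apply: Rmult_le_pos; last exact/Rlt_le/Rinv_0_lt_compat.
by apply: Rsum_ge0 => z; case: (_ == _); [apply: bump_ge0 | lra].
Qed.

Lemma approx_neq0 x v : approx x v <> 0 ->
  exists2 z, cell_vertex z = v & 0 < bump z (rescale N x).
Proof.
move=> approx_v; apply: NNPP => none; apply: approx_v.
rewrite /approx /Rsum big1 ?Rdiv_0_l // => z _.
case: eqP => // zv; case: (Rle_lt_or_eq_dec _ _ (bump_ge0 z (rescale N x))) => // bump_pos.
by case: none; exists z.
Qed.

Lemma approx_cont : sphere_cont approx.
Proof.
move=> x Sx v; have den_pos := Rsum_bump_gt0 Sx; have x_pos := norm_sup_sphere Sx.
have bump_cont z : cont_within (@close_sup m) (@sphere m) x (fun y => bump z (rescale N y)).
  apply: cont_within_Rprod; first exact: close_sup_mono.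
  move=> [a b]; have offset_cont o : cont_within (@close_sup m) (@sphere m) x
      (fun y => offset z (rescale N y) o).
    case: o => [i|] /=; last exact: cont_within_const.
    apply: cont_within_minus; [exact: close_sup_mono | exact: cont_within_rescale |].
    exact: cont_within_const.
  apply: cont_within_max; [exact: close_sup_mono | exact: cont_within_const |].
  apply: cont_within_minus; [exact: close_sup_mono | exact: cont_within_const |].
  by apply: cont_within_minus; [exact: close_sup_mono | apply: offset_cont ..].
apply: cont_within_div; [exact: close_sup_mono | lra | |].
  apply: cont_within_Rsum; first exact: close_sup_mono.
  by move=> z; case: (_ == _); [apply: bump_cont | apply: cont_within_const].
by apply: cont_within_Rsum; [exact: close_sup_mono | apply: bump_cont].
Qed.

Lemma card_supp_approx x : sphere x -> (#|supp (approx x)| <= m.+1)%nat.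
Proof.
move=> Sx; have [i0 [k u_int]] := rescale_int_coord N Sx.
apply: leq_trans (card_bump_gt0 N u_int).
apply: leq_trans (leq_imset_card cell_vertex _).
apply: subset_leq_card; apply/subsetP => v /suppP /approx_neq0 [z <- bump_pos].
by apply/imsetP; exists z; rewrite // inE; apply/RltbP.
Qed.

Lemma cell_point_close x z : sphere x -> 0 < bump z (rescale N x) ->
  forall i, Rabs (cell_point z i - x i / norm_sup x) < / INR N.
Proof.
move=> Sx /bump_gt0 offsets i; have x_pos := norm_sup_sphere Sx.
have N_pos : 0 < INR N by apply: lt_0_INR; apply/ltP; lia.
have := offsets (Some i) None; have := offsets None (Some i) => /= lt1 gt1.
have -> : cell_point z i - x i / norm_sup x =
    / INR N * (grid_coord z i - rescale N x i).
  by rewrite /cell_point /rescale; field; lra.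
rewrite Rabs_mult Rabs_right; last exact/Rle_ge/Rlt_le/Rinv_0_lt_compat.
rewrite -[X in _ < X]Rmult_1_r; apply: Rmult_lt_compat_l; first exact: Rinv_0_lt_compat.
by split_Rabs; lra.
Qed.

End Approximation.

Section SimplicialApproximation.
Variable m : nat.
Notation E := ('I_m.+1 -> R).
Variable V : finType.
Variable K : {set V} -> Prop.
Variable f : E -> V -> R.
Hypothesis f_cont : sphere_cont f.
Hypothesis f_real : forall x, sphere x -> realization K (f x).

Lemma cell_vertex_pos N v0 : (2 <= N)%nat ->
  (forall y w : E, norm_sup y = 1 -> (forall i, Rabs (w i - y i) < / INR N) ->
     forall v, Rabs (f (normalize w) v - f (normalize y) v) < 2 * / (2 * INR #|V|)) ->
  forall x (z : grid m N), sphere x -> 0 < bump z (rescale N x) -> 0 < f x (cell_vertex f v0 z).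
Proof.
move=> N_ge2 f_unif x z Sx bump_pos; have x_pos := norm_sup_sphere Sx.
have N_ge : 2 <= INR N by apply: (le_INR 2); apply/leP.
set y : E := fun i => x i / norm_sup x.
set w := cell_point z.
have y_sup1 : norm_sup y = 1 := norm_sup_div_self x_pos.
have wy : forall i, Rabs (w i - y i) < / INR N.
  by apply: cell_point_close => //; apply/leP; lia.
have y_normalize : normalize y = x.
  by rewrite /y normalize_div ?normalize_sphere ?norm2_sphere //; lra.
have w_pos : 0 < norm2 w.
  have [i0 y_i0] := norm_sup_attained y; rewrite y_sup1 in y_i0.
  have := coord_le_norm2 w i0; have := wy i0.
  have : / INR N <= / 2 by apply: Rinv_le_contravar; lra.
  by move: y_i0; split_Rabs; lra.
have [fw_ge0 [fw_sum1 _]] := f_real (sphere_normalize w_pos).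
have [v1 fw_v1] := Rsum1_exists_ge_avg fw_ge0 fw_sum1.
have V_pos : 0 < INR #|V| by apply/lt_0_INR/ltP/card_gt0P; exists v1.
have fw_vertex : / INR #|V| <= f (normalize w) (cell_vertex f v0 z).
  by apply: (epsilon_spec (inhabits v0) (fun v => / INR #|V| <= f (normalize w) v)); exists v1.
have := f_unif y w y_sup1 wy (cell_vertex f v0 z); rewrite y_normalize.
have -> : 2 * / (2 * INR #|V|) = / INR #|V| by field; lra.
by split_Rabs; lra.
Qed.

Lemma simplicial_approximation : exists g : E -> V -> R,
  [/\ sphere_cont g, forall x, sphere x -> realization K (g x),
      forall x, sphere x -> supp (g x) \subset supp (f x) &
      forall x, sphere x -> (#|supp (g x)| <= m.+1)%nat].
Proof.
have [f0_ge0 [f0_sum1 _]] := f_real (sphere_e0 m).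
have [v0 _] := Rsum1_exists_ge_avg f0_ge0 f0_sum1.
have V_pos : 0 < INR #|V| by apply/lt_0_INR/ltP/card_gt0P; exists v0.
have eps_gt0 : 0 < / (2 * INR #|V|) by apply: Rinv_0_lt_compat; lra.
have [N [N_ge2 f_unif]] := uniform_cont_comp_normalize f_cont eps_gt0.
have N_ge1 : (1 <= N)%nat by lia.
have supp_sub x : sphere x -> supp (approx f N v0 x) \subset supp (f x).
  move=> Sx; apply/subsetP => v /suppP /approx_neq0 [z <- bump_pos]; apply/suppP.
  by have := cell_vertex_pos v0 N_ge2 f_unif Sx bump_pos; lra.
exists (approx f N v0); split=> // [ | x Sx | x Sx].
- exact: approx_cont.
- have [_ [_ [s Ks f_s]]] := f_real Sx.
  split=> [v | ]; first exact: approx_ge0.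
  split; first exact: Rsum_approx.
  by exists s => // v /suppP /(subsetP (supp_sub x Sx)) /suppP; apply: f_s.
exact: card_supp_approx.
Qed.

End SimplicialApproximation.

Lemma homotopic_full_bary n (S : {set edges n}) m (A : ('I_m.+1 -> R) -> vertex n -> R) :
  S != set0 -> sphere_cont A -> (forall x, sphere x -> realization (model_complex S) (A x)) ->
  (forall x, sphere x -> (#|supp (A x)| < n)%nat) ->
  homotopic (model_complex S) A (fun _ => @full_bary n).
Proof.
move=> S_neq0 A_cont A_real A_card.
have n_gt0 : (0 < n)%nat by have := A_card _ (sphere_e0 m); lia.
have n_pos : 0 < INR n by apply/lt_0_INR/ltP.
set dl := / (2 * INR n).
have dl_gt0 : 0 < dl by apply: Rinv_0_lt_compat; lra.
have ndl : INR n * dl <= / 2 by rewrite /dl; right; field; lra.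
set T := fun x => thresholded dl (A x).
have T_cont : sphere_cont T := sphere_cont_thresholded A_cont A_real (Rlt_le _ _ dl_gt0) ndl.
have T_real x : sphere x -> realization (model_complex S) (T x).
  by move=> Sx; apply: thresholded_realization; [apply: A_real | lra | ].
have T_full x : sphere x -> exists q, 0 < T x (q, setT).
  move=> Sx; have [q A_q] := exists_absent_color (A_card x Sx).
  by exists q; apply: thresholded_absent_pos => //; apply: A_real.
apply: (homotopic_trans (g := T)).
  exact: (homotopic_thresholded A_cont A_real (Rlt_le _ _ dl_gt0) ndl).
apply: (homotopic_trans (g := fun x => drain 1 (T x))).
  exact: (homotopic_drain1 T_cont T_real T_full).
apply: homotopic_interp; first exact: model_complex_sub.
- exact: sphere_cont_drain1 T_cont T_real T_full.
- by move=> x Sx v; apply: cont_within_const.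
- by move=> x Sx; have [q T_q] := T_full x Sx; apply: drain_realization (T_real x Sx) T_q _; lra.
- by move=> x Sx; apply: full_bary_realization.
move=> x Sx; apply: model_complex_sub (model_complex_full S_neq0).
by rewrite subUset supp_drain1 supp_full_bary.
Qed.

Theorem theorem4 (n : nat) (S : {set edges n}) :
  S != set0 ->
  (forall G, G \in S -> is_graph G) ->
  k_connected (unint_complex (closed_above_allowed S)) (Z.of_nat n - 2)%Z.
Proof.
move=> S_neq0 _; change (unint_complex _) with (model_complex S).
split=> [k_ge | m m_le f /sphere_cont_of_continuous_on f_cont f_real].
  by exists (@full_bary n); apply: full_bary_realization => //; lia.
have [g [g_cont g_real g_sub g_card]] := simplicial_approximation f_cont f_real.
apply: (extension_of_homotopic_const (c := @full_bary n)).
apply: (homotopic_trans (g := g)); last first.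
  by apply: homotopic_full_bary => // x Sx; have := g_card x Sx; lia.
apply: (homotopic_interp (@model_complex_sub n S) f_cont g_cont f_real g_real) => x Sx.
rewrite (setUidPl (g_sub x Sx)).
by have /(model_realizationP S) [_ _] := f_real x Sx.
Qed.
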